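(* Let $V$ be a finite nonempty set and $f:\{0,1\}^V\to\{0,1\}^V$ be non-expansive. Every subnetwork of $f$ has a unique fixed point if and only if $f$ has no circular subnetwork (i.e., no subnetwork that is positive-circular or negative-circular).
   Context: $d$ is the Hamming distance on $\{0,1\}^V$; $f$ is non-expansive if $d(f(x),f(y))\le d(x,y)$ for all $x,y$. For nonempty $I\subseteq V$ and $z\in\{0,1\}^{V\setminus I}$, the subnetwork of $f$ induced by $z$ is $h:\{0,1\}^I\to\{0,1\}^I$ with $h(x|_I)=f(x)|_I$ for all $x$ whose restriction to $V\setminus I$ is $z$ ($f$ is a subnetwork of itself). For a network $g$ on $W$ and $x^{j\alpha}$ the point equal to $x$ except its $j$-component is $\alpha$, the global interaction graph $G(g)$ is the signed digraph on $W$ with a positive (resp. negative) arc from $j$ to $i$ iff $g_i(x^{j1})-g_i(x^{j0})=1$ (resp. $=-1$) for at least one $x$. A cycle is a subgraph with at most one arc between any ordered pair of vertices whose underlying unsigned digraph is a directed cycle; positive (negative) if it has an even (odd) number of negative arcs. $g$ is positive-circular (negative-circular) if $G(g)$ itself is a positive (negative) cycle through all vertices of $W$. *)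

From mathcomp Require Import all_boot.
Set Implicit Arguments. Unset Strict Implicit. Unset Printing Implicit Defensive.

(* Configurations x in {0,1}^W, with 0 = false, 1 = true. *)
Definition config (W : finType) := {ffun W -> bool}.

Definition network (W : finType) := config W -> config W.

Definition hamming (W : finType) (x y : config W) : nat :=
  #|[set v | x v != y v]|.

Definition non_expansive (W : finType) (f : network W) : Prop :=
  forall x y, hamming (f x) (f y) <= hamming x y.

Definition upd (W : finType) (x : config W) (j : W) (a : bool) : config W :=
  [ffun k => if k == j then a else x k].

(* Subnetwork of f on I induced by z: only the values of z outside I matter,
   so z : config V represents an element of {0,1}^(V \ I). *)
Definition subnet (V : finType) (f : network V) (I : {set V}) (z : config V)
  : network {v : V | v \in I} :=
  fun x => [ffun i : {v : V | v \in I} =>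
    f [ffun v => if (insub v : option {v : V | v \in I}) is Some w
                 then x w else z v] (val i)].

Definition pos_arc (W : finType) (g : network W) (j i : W) : Prop :=
  exists x, g (upd x j true) i = true /\ g (upd x j false) i = false.
Definition neg_arc (W : finType) (g : network W) (j i : W) : Prop :=
  exists x, g (upd x j true) i = false /\ g (upd x j false) i = true.

(* G(g) itself is a cycle through all vertices of W: the arc set is exactly
   {j -> s j} for a successor map s whose single orbit is all of W, with at most
   one (signed) arc per ordered pair. *)
Definition circular_with (W : finType) (g : network W) (even_neg : bool) : Prop :=
  exists s : W -> W,
    (forall j i, (pos_arc g j i \/ neg_arc g j i) <-> i = s j) /\
    (forall j i, fconnect s j i) /\
    (forall j, ~ (pos_arc g j (s j) /\ neg_arc g j (s j))) /\
    exists N : {set W},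
      (forall j, j \in N <-> neg_arc g j (s j)) /\ ~~ odd #|N| = even_neg.

Definition positive_circular (W : finType) (g : network W) : Prop :=
  circular_with g true.
Definition negative_circular (W : finType) (g : network W) : Prop :=
  circular_with g false.

Definition is_fixed (W : finType) (g : network W) (x : config W) : Prop := g x = x.

Arguments subnet [V] f I z _.

From mathcomp Require Import all_boot zify.
From Stdlib Require Import Classical.
Set Implicit Arguments. Unset Strict Implicit. Unset Printing Implicit Defensive.

(* A circular network satisfies h z (s j) = z j (+) (j \in N) along a cyclic
   permutation s: if |N| is even, with any fixed point x it also fixes
   antipode x; if |N| is odd, it has no fixed point by parity.

   Conversely, induct on the size of the subnetwork, so that every proper
   subnetwork of a non-expansive h has a unique fixed point.  If h has two
   fixed points they are antipodal; if it has none, the two points fixed off a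
   coordinate w0 are antipodal.  Either way h u = toggle u C and
   h (antipode u) = toggle (antipode u) C with |C| <= 1, so
   k z := toggle (h z) C is non-expansive and fixes u and antipode u.  Hence
   k preserves the distance to u, sends toggle u [set j] to some
   toggle u [set s j], and s maps the difference set of z and u into that of
   k z and u.  A proper nonempty s-invariant set C' would make toggle u C' a
   second point fixed by h on C' or on its complement, so s is a single cycle
   and h is circular, with the sign of |C|. *)

Section Configurations.
Variable W : finType.
Implicit Types (a b u x y : config W) (S : {set W}).

Definition toggle u S : config W := [ffun v => u v (+) (v \in S)].
Definition antipode u := toggle u setT.
Definition diffset a b := [set v | a v != b v].

Lemma hammingE a b : hamming a b = #|diffset a b|.
Proof. by []. Qed.

Lemma toggleK u S : toggle (toggle u S) S = u.
Proof. by apply/ffunP => v; rewrite !ffunE -addbA addbb addbF. Qed.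

Lemma toggle0 u : toggle u set0 = u.
Proof. by apply/ffunP => v; rewrite ffunE in_set0 addbF. Qed.

Lemma toggle_diffset a u : toggle u (diffset a u) = a.
Proof. by apply/ffunP => v; rewrite !ffunE inE; case: (a v); case: (u v). Qed.

Lemma diffset_toggle u S : diffset (toggle u S) u = S.
Proof. by apply/setP => v; rewrite inE ffunE; case: (u v); case: (v \in S). Qed.

Lemma diffset_id a : diffset a a = set0.
Proof. by apply/setP => v; rewrite !inE eqxx. Qed.

Lemma hamming_toggle a b S : hamming (toggle a S) (toggle b S) = hamming a b.
Proof.
apply: eq_card => v; rewrite !inE !ffunE.
by case: (a v); case: (b v); case: (v \in S).
Qed.

Lemma hamming_antipode a u : hamming a (antipode u) + hamming a u = #|W|.
Proof.
rewrite /hamming -(cardsC [set v | a v != u v]) addnC; congr (_ + _).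
by apply: eq_card => v; rewrite !inE !ffunE inE; case: (a v); case: (u v).
Qed.

Lemma hamming_toggle1_neq a u s :
  a s != u s -> (hamming a (toggle u [set s])).+1 = hamming a u.
Proof.
move=> neq_s; rewrite /hamming (cardsD1 s [set v | a v != u v]) inE neq_s.
congr _.+1; apply: eq_card => v; rewrite !inE !ffunE inE.
case: (eqVneq v s) => [->|_]; last by rewrite addbF.
by move: neq_s; case: (a s); case: (u s).
Qed.

Lemma hamming_toggle1_eq a u s :
  a s = u s -> hamming a (toggle u [set s]) = (hamming a u).+1.
Proof.
move=> eq_s; rewrite /hamming.
have -> : [set v | a v != toggle u [set s] v] = s |: [set v | a v != u v].
  apply/setP => v; rewrite !inE !ffunE inE.
  by case: (eqVneq v s) => [->|_]; rewrite ?eq_s ?addbF //; case: (u s).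
by rewrite cardsU1 inE eq_s eqxx.
Qed.

Lemma odd_card_set (P : pred W) : odd #|[set j | P j]| = \big[addb/false]_j P j.
Proof.
rewrite -sum1dep_card (big_morph odd oddD (erefl : odd 0 = false)) big_mkcond.
by apply: eq_bigr => j _; case: (P j).
Qed.

(* Around a permutation [s], every [x j] is counted twice, hence cancels. *)
Lemma odd_card_xor_shift (s : W -> W) x S : injective s ->
  odd #|[set j | x (s j) (+) x j (+) (j \in S)]| = odd #|S|.
Proof.
move=> s_inj; have -> : #|S| = #|[set j | j \in S]| by apply: eq_card => j; rewrite inE.
rewrite !odd_card_set !big_split /=.
by rewrite -(reindex_inj s_inj (F := x) (P := predT)) addbb.
Qed.

Lemma upd_id x k : upd x k (x k) = x.
Proof. by apply/ffunP => v; rewrite ffunE; case: eqP => [->|]. Qed.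

Lemma net_upd_noarc (h : network W) k i :
  ~ pos_arc h k i -> ~ neg_arc h k i -> forall x (c : bool), h (upd x k c) i = h x i.
Proof.
move=> no_pos no_neg x c.
have upd_eq : h (upd x k true) i = h (upd x k false) i.
  case E1: (h (upd x k true) i); case E2: (h (upd x k false) i) => //.
  - by case: no_pos; exists x.
  - by case: no_neg; exists x.
by rewrite -{2}(upd_id x k); case: c; case: (x k).
Qed.

Lemma net_toggle_noarc (h : network W) i S x :
  (forall k, k \in S -> ~ pos_arc h k i /\ ~ neg_arc h k i) ->
  h (toggle x S) i = h x i.
Proof.
have [n] := ubnP #|S|; elim: n S => // n IH S; rewrite ltnS => leSn noarc.
have [->|/set0Pn [k kS]] := eqVneq S set0; first by rewrite toggle0.
have -> : toggle x S = upd (toggle x (S :\ k)) k (~~ x k).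
  apply/ffunP => v; rewrite !ffunE !inE.
  by case: (eqVneq v k) => [->|]; rewrite ?kS ?addbT.
have [no_pos no_neg] := noarc k kS.
rewrite net_upd_noarc // IH // => [|k' /setD1P [_]]; last exact: noarc.
by rewrite (cardsD1 k S) kS in leSn.
Qed.

Lemma net_coord_eq (h : network W) i j x y :
  (forall k, k != j -> ~ pos_arc h k i /\ ~ neg_arc h k i) ->
  x j = y j -> h x i = h y i.
Proof.
move=> noarc xy; rewrite -(toggle_diffset y x) net_toggle_noarc // => k.
by rewrite inE => yxk; apply: noarc; apply: contra_neq yxk => ->.
Qed.

End Configurations.

Section Orbits.
Variables (T : finType) (s : T -> T).
Hypothesis s_cyclic : forall j i, fconnect s j i.

Lemma fconnect_all_surj i : exists j, i = s j.
Proof.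
by exists (iter (findex s (s i) i) s i); rewrite -iterS iterSr iter_findex.
Qed.

Lemma fconnect_all_inj : injective s.
Proof.
have /image_injP s_inj : #|codom s| == #|T|.
  apply/eqP/eq_card => i; have [j ->] := fconnect_all_surj i.
  by rewrite codom_f inE.
by move=> x y; apply: s_inj.
Qed.

End Orbits.

Lemma fconnect_of_no_invariant (T : finType) (s : T -> T) :
  (forall C : {set T}, C != set0 -> s @: C = C -> C = setT) ->
  forall j i, fconnect s j i.
Proof.
move=> no_inv j i.
pose closed (C : {set T}) := (C != set0) && (s @: C \subset C).
have closedT : closed setT by rewrite /closed subsetT andbT; apply/set0Pn; exists j.
have [C0 /andP [C0_n0 C0_cl] C0_min] := arg_minnP (fun C : {set T} => #|C|) closedT.
have C0_inv : s @: C0 = C0.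
  apply/eqP; rewrite eqEcard C0_cl C0_min //.
  by rewrite /closed imset_eq0 C0_n0 imsetS.
have closed_full C : closed C -> C = setT.
  move/C0_min; rewrite (no_inv C0 C0_n0 C0_inv) => leTC.
  by apply/eqP; rewrite eqEcard subsetT.
suff /setP/(_ i) : [set i | fconnect s j i] = setT by rewrite !inE.
apply: closed_full; rewrite /closed; apply/andP; split.
  by apply/set0Pn; exists j; rewrite inE connect0.
apply/subsetP => _ /imsetP [v jv ->]; rewrite inE in jv.
by rewrite inE (connect_trans jv (fconnect1 _ _)).
Qed.

Definition xor_cycle (W : finType) (h : network W) (s : W -> W) (N : {set W}) :=
  forall z j, h z (s j) = z j (+) (j \in N).

Lemma xor_cycle_of_circular (W : finType) (h : network W) e :
  circular_with h e ->
  exists s (N : {set W}),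
    [/\ forall j i, fconnect s j i, xor_cycle h s N & ~~ odd #|N| = e].
Proof.
case=> s [arcs [s_cyclic [not_both [N [N_neg parN]]]]].
have s_inj := fconnect_all_inj s_cyclic.
exists s, N; split => // z j.
have only_j k : k != j -> ~ pos_arc h k (s j) /\ ~ neg_arc h k (s j).
  move=> /eqP kj; split=> arc; apply: kj; apply: s_inj; symmetry; apply/arcs.
    by left.
  by right.
have from_j x c : h (upd x j c) (s j) = h (upd z j c) (s j).
  by apply: net_coord_eq only_j _; rewrite !ffunE eqxx.
rewrite -{1}(upd_id z j).
have [pos|neg] : pos_arc h j (s j) \/ neg_arc h j (s j) by apply/arcs.
- have jN : j \notin N by apply/negP => /N_neg neg; apply: (not_both j).
  rewrite (negbTE jN) addbF; case: pos => x; rewrite !from_j.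
  by case: (z j) => [[-> _]|[_ ->]].
- rewrite (N_neg j).2 // addbT; case: neg => x; rewrite !from_j.
  by case: (z j) => [[-> _]|[_ ->]].
Qed.

Lemma circular_of_xor_cycle (W : finType) (h : network W) s (N : {set W}) :
  (forall j i, fconnect s j i) -> xor_cycle h s N -> circular_with h (~~ odd #|N|).
Proof.
move=> s_cyclic hN.
pose x0 : config W := [ffun _ => false].
have h_upd x j c : h (upd x j c) (s j) = c (+) (j \in N) by rewrite hN ffunE eqxx.
exists s; split; [|split; [by []|split]].
- move=> j i; split; last first.
    by move=> ->; case jN: (j \in N); [right|left]; exists x0; rewrite !h_upd jN.
  have [m ->] := fconnect_all_surj s_cyclic i.
  case: (eqVneq m j) => [-> //|mj].
  by case=> [] [x]; rewrite !hN !ffunE (negbTE mj); case: (x m); case: (m \in N); case.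
- by move=> j [[x [+ _]] [y [+ _]]]; rewrite !h_upd; case: (j \in N).
- exists N; split => // j; split => [jN|[x [+ _]]].
    by exists x0; rewrite !h_upd jN.
  by rewrite h_upd; case: (j \in N).
Qed.

Lemma circular_not_unique_fixed (W : finType) (h : network W) e :
  0 < #|W| -> circular_with h e -> ~ exists! x, is_fixed h x.
Proof.
move=> /card_gt0P [w0 _] /xor_cycle_of_circular [s [N [s_cyclic hN parN]]].
case=> x [x_fix x_uniq].
have x_shift j : x (s j) = x j (+) (j \in N) by rewrite -{1}x_fix hN.
case: e parN => parN.
- have : is_fixed h (antipode x).
    apply/ffunP => i; have [j ->] := fconnect_all_surj s_cyclic i.
    by rewrite hN !ffunE !in_setT !addbT x_shift addNb.
  by move/x_uniq/ffunP/(_ w0); rewrite ffunE in_setT addbT; case: (x w0).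
- have := odd_card_xor_shift x N (fconnect_all_inj s_cyclic).
  have -> : [set j | x (s j) (+) x j (+) (j \in N)] = set0.
    by apply/setP => j; rewrite !inE x_shift; case: (x j); case: (j \in N).
  by rewrite cards0; move: parN; case: (odd #|N|).
Qed.

Section FixedOn.
Variables (W : finType) (h : network W).
Implicit Types (x y : config W) (E : {set W}).

Definition fixed_on E x := forall v, v \in E -> h x v = x v.
Definition agree_off E x y := forall v, v \notin E -> x v = y v.
(* The subnetwork of [h] on [E] induced by [y] has a unique fixed point,
   phrased on configurations of [W] that agree with [y] off [E]. *)
Definition unique_fixed_on E y := exists! x, agree_off E x y /\ fixed_on E x.

Lemma unique_fixed_on_eq E y x x' : unique_fixed_on E y ->
  agree_off E x y -> fixed_on E x -> agree_off E x' y -> fixed_on E x' -> x = x'.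
Proof. by case=> x0 [_ x0_uniq] *; rewrite -(x0_uniq x) // -(x0_uniq x'). Qed.

Lemma unique_fixed_on0 y : unique_fixed_on set0 y.
Proof.
exists y; split=> [|x [xy _]]; first by split=> // v; rewrite in_set0.
by apply/ffunP => v; rewrite xy ?in_set0.
Qed.

Lemma unique_fixed_onT y : (exists! x, is_fixed h x) <-> unique_fixed_on setT y.
Proof.
have fixedT x : is_fixed h x <-> agree_off setT x y /\ fixed_on setT x.
  split=> [x_fix|[_ x_fix]]; last by apply/ffunP => v; rewrite x_fix ?in_setT.
  by split=> v; rewrite ?in_setT // x_fix.
by split=> -[x [/fixedT x_fix x_uniq]]; exists x; split=> // x' /fixedT; apply: x_uniq.
Qed.

Lemma unique_fixed_on_agree E y y' :
  agree_off E y y' -> unique_fixed_on E y -> unique_fixed_on E y'.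
Proof.
move=> yy' [x [[xy x_fix] x_uniq]]; exists x; split.
  by split=> // v vE; rewrite xy // yy'.
by move=> x' [x'y' x'_fix]; apply: x_uniq; split=> // v vE; rewrite x'y' // yy'.
Qed.

Lemma fixed_on_toggle E x (C : {set W}) :
  h x = toggle x C -> [disjoint E & C] -> fixed_on E x.
Proof.
move=> hx EC v vE; rewrite hx ffunE.
by rewrite (disjointFr EC vE) addbF.
Qed.

End FixedOn.

Lemma ex_unique_transfer (A B : Type) (P : A -> Prop) (Q : B -> Prop)
    (g : A -> B) (r : B -> A) :
  cancel g r -> (forall x, P x -> Q (g x)) ->
  (forall X, Q X -> P (r X) /\ g (r X) = X) ->
  (exists! x, P x) <-> (exists! X, Q X).
Proof.
move=> gK PQ QP; split=> [[x [Px x_uniq]]|[X [QX X_uniq]]].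
  exists (g x); split=> [|X /QP [/x_uniq xr gX]]; first exact: PQ.
  by rewrite xr.
exists (r X); split=> [|x /PQ /X_uniq ->]; [exact: (QP X QX).1 | exact: gK].
Qed.

Section Subnetworks.
Variables (V : finType) (I : {set V}).
Local Notation W := {v : V | v \in I}.

Definition extend (x : config W) (z : config V) : config V :=
  [ffun v => if (insub v : option W) is Some w then x w else z v].
Definition restrict (X : config V) : config W := [ffun w => X (val w)].

Lemma subnetE (f : network V) z x : subnet f I z x = restrict (f (extend x z)).
Proof. by apply/ffunP => w; rewrite !ffunE. Qed.

Lemma extend_val x z w : extend x z (val w) = x w.
Proof. by rewrite ffunE valK. Qed.

Lemma extend_out x z v : v \notin I -> extend x z v = z v.
Proof. by move=> vI; rewrite ffunE insubN. Qed.

Lemma restrict_extend z : cancel (extend ^~ z) restrict.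
Proof. by move=> x; apply/ffunP => w; rewrite ffunE extend_val. Qed.

Lemma extend_restrict X z : agree_off I X z -> extend (restrict X) z = X.
Proof.
move=> Xz; apply/ffunP => v; rewrite ffunE.
case: insubP => [w _ <-|vI]; first by rewrite ffunE.
by rewrite Xz.
Qed.

Lemma mem_val_imset (E : {set W}) w : (val w \in val @: E) = (w \in E).
Proof. by rewrite mem_imset //; apply: val_inj. Qed.

Lemma unique_fixed_on_subnet (f : network V) z E y :
  unique_fixed_on (subnet f I z) E y <-> unique_fixed_on f (val @: E) (extend y z).
Proof.
have valE_sub v : v \in val @: E -> v \in I by case/imsetP=> w _ ->; apply: valP.
apply: ex_unique_transfer (restrict_extend z) _ _ => [x [xy x_fix]|X [Xy X_fix]].
  split=> [v|_ /imsetP [w wE ->]]; last by rewrite extend_val -x_fix // subnetE ffunE.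
  case: (insubP W v) => [w _ <-|vI] vE; last by rewrite !extend_out.
  by rewrite !extend_val xy // -mem_val_imset.
have XK : extend (restrict X) z = X.
  apply: extend_restrict => v vI; rewrite Xy ?extend_out //.
  by apply: contra vI; apply: valE_sub.
split=> //; split=> w wE; rewrite ?subnetE !ffunE ?XK.
  by rewrite Xy ?extend_val // mem_val_imset.
by rewrite X_fix // mem_val_imset.
Qed.

Lemma unique_fixed_subnet (f : network V) z :
  (exists! x, is_fixed (subnet f I z) x) <-> unique_fixed_on f I z.
Proof.
have valT : val @: [set: W] = I.
  apply/setP => v; apply/imsetP/idP => [[w _ ->]|vI]; first exact: valP.
  by exists (Sub v vI).
rewrite (unique_fixed_onT _ [ffun _ => false]) unique_fixed_on_subnet valT.
by split; apply: unique_fixed_on_agree => v vI; rewrite extend_out.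
Qed.

Lemma hamming_restrict X Y : hamming (restrict X) (restrict Y) <= hamming X Y.
Proof.
rewrite /hamming -(card_imset _ val_inj); apply: subset_leq_card.
by apply/subsetP => _ /imsetP [w XYw ->]; rewrite !inE !ffunE in XYw *.
Qed.

Lemma hamming_extend x y z : hamming (extend x z) (extend y z) = hamming x y.
Proof.
rewrite /hamming -(card_imset _ val_inj); apply: eq_card => v; rewrite inE.
case: (insubP W v) => [w _ <-|vI]; first by rewrite mem_val_imset inE !extend_val.
rewrite !extend_out // eqxx; apply/esym/negbTE; apply: contra vI.
by case/imsetP=> w _ ->; apply: valP.
Qed.

Lemma non_expansive_subnet (f : network V) z :
  non_expansive f -> non_expansive (subnet f I z).
Proof.
move=> f_ne x y; rewrite !subnetE -(hamming_extend x y z).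
exact: leq_trans (hamming_restrict _ _) (f_ne _ _).
Qed.

Lemma card_subnet_type : #|{: W}| = #|I|.
Proof. by rewrite card_sig; apply: eq_card => v; rewrite inE. Qed.

End Subnetworks.

Lemma disjoint_or_setC_le1 (T : finType) (C D : {set T}) :
  #|D| <= 1 -> [disjoint C & D] \/ [disjoint ~: C & D].
Proof.
case: (set_0Vmem D) => [->|[i iD]] D_le1; first by left; rewrite -setI_eq0 setI0.
have -> : D = [set i] by apply/setP => v; rewrite (card_le1P D_le1 i iD) inE.
rewrite ![[disjoint _ & [set i]]]disjoint_sym !disjoints1 inE.
by case: (i \in C); [right|left].
Qed.

Section AntipodalIsometry.
Variables (W : finType) (k : network W) (u : config W).
Hypotheses (k_ne : non_expansive k) (k_u : k u = u).
Hypothesis k_antipode : k (antipode u) = antipode u.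

Lemma hamming_k z : hamming (k z) u = hamming z u.
Proof.
have := k_ne z u; have := k_ne z (antipode u); rewrite k_u k_antipode.
have := hamming_antipode (k z) u; have := hamming_antipode z u; lia.
Qed.

Definition shift j := odflt j [pick v in diffset (k (toggle u [set j])) u].

Lemma diffset_k_toggle1 j : diffset (k (toggle u [set j])) u = [set shift j].
Proof.
have /cards1P [v Ev] : #|diffset (k (toggle u [set j])) u| == 1.
  by rewrite -hammingE hamming_k hammingE diffset_toggle cards1.
by rewrite /shift Ev; case: pickP => [v'|/(_ v)]; rewrite !inE ?eqxx // => /eqP ->.
Qed.

Lemma k_toggle1 j : k (toggle u [set j]) = toggle u [set shift j].
Proof. by rewrite -diffset_k_toggle1 toggle_diffset. Qed.

(* Otherwise [k] would shrink the distance from [z] to [toggle u [set j]]. *)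
Lemma shift_diffset z j : j \in diffset z u -> shift j \in diffset (k z) u.
Proof.
rewrite !inE => zj; apply: contraT; rewrite negbK => /eqP kz.
have := k_ne z (toggle u [set j]); rewrite k_toggle1.
have := hamming_toggle1_eq kz; have := hamming_toggle1_neq zj.
have := hamming_k z; lia.
Qed.

Lemma diffset_k_superset z : shift @: diffset z u \subset diffset (k z) u.
Proof. by apply/subsetP => _ /imsetP [j jz ->]; apply: shift_diffset. Qed.

Lemma k_toggle_invariant (C : {set W}) : shift @: C = C -> k (toggle u C) = toggle u C.
Proof.
move=> C_inv; rewrite -{1}(toggle_diffset (k (toggle u C)) u); congr toggle.
have sub : C \subset diffset (k (toggle u C)) u.
  by rewrite -{1}C_inv -{1}(diffset_toggle u C) diffset_k_superset.
apply/eqP; rewrite eq_sym eqEcard sub /=.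
by rewrite -hammingE hamming_k hammingE diffset_toggle.
Qed.

Lemma diffset_k z : injective shift -> diffset (k z) u = shift @: diffset z u.
Proof.
move=> shift_inj; apply/esym/eqP; rewrite eqEcard diffset_k_superset /=.
by rewrite card_imset // -!hammingE hamming_k.
Qed.

End AntipodalIsometry.

Section UniqueFixedPoint.
Variables (W : finType) (h : network W).
Implicit Types (a b p u x y : config W).
Hypothesis h_ne : non_expansive h.
Hypothesis h_proper : forall E y, E != setT -> unique_fixed_on h E y.

Section ToggledFixedPair.
Variables (u : config W) (Cc : {set W}).
Hypotheses (Cc_le1 : #|Cc| <= 1) (h_u : h u = toggle u Cc).
Hypothesis h_antipode : h (antipode u) = toggle (antipode u) Cc.

Let k z := toggle (h z) Cc.

Let k_ne : non_expansive k.
Proof. by move=> a b; rewrite /k hamming_toggle. Qed.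

Let k_u : k u = u.
Proof. by rewrite /k h_u toggleK. Qed.

Let k_antipode : k (antipode u) = antipode u.
Proof. by rewrite /k h_antipode toggleK. Qed.

Let h_k z : h z = toggle (k z) Cc.
Proof. by rewrite /k toggleK. Qed.

Local Notation shift := (shift k u).

(* [toggle u C] would be a second fixed point of [h] on [C] or on [~: C],
   besides [u] or [antipode u] respectively. *)
Lemma shift_no_invariant C : C != set0 -> shift @: C = C -> C = setT.
Proof.
move=> C_n0 C_inv; apply/eqP; apply: contraT => C_nT.
have h_q : h (toggle u C) = toggle (toggle u C) Cc.
  by rewrite h_k (k_toggle_invariant k_ne k_u k_antipode C_inv).
have [CCc|CCc] := disjoint_or_setC_le1 C Cc_le1.
- have u_q : u = toggle u C.
    apply: (unique_fixed_on_eq (h_proper u C_nT) _ (fixed_on_toggle h_u CCc) _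
                               (fixed_on_toggle h_q CCc)) => // v vC.
    by rewrite ffunE (negbTE vC) addbF.
  by move: C_n0; rewrite -(diffset_toggle u C) -u_q diffset_id eqxx.
have CC_nT : ~: C != setT by apply: contra C_n0 => /eqP CT; rewrite -[C]setCK CT setCT.
have au_q : antipode u = toggle u C.
  apply: (unique_fixed_on_eq (h_proper (antipode u) CC_nT) _
            (fixed_on_toggle h_antipode CCc) _ (fixed_on_toggle h_q CCc)) => // v.
  by rewrite inE negbK => vC; rewrite !ffunE vC in_setT.
by move: C_nT; rewrite -(diffset_toggle u C) -au_q diffset_toggle eqxx.
Qed.

Lemma toggled_fixed_pair_circular : circular_with h (~~ odd #|Cc|).
Proof.
have shift_cyclic := fconnect_of_no_invariant shift_no_invariant.
have shift_inj := fconnect_all_inj shift_cyclic.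
pose N := [set j | u (shift j) (+) u j (+) (j \in shift @^-1: Cc)].
have -> : odd #|Cc| = odd #|N| by rewrite odd_card_xor_shift // card_preimset.
apply: circular_of_xor_cycle shift_cyclic _ => z j.
have shift_z : (shift j \in diffset (k z) u) = (j \in diffset z u).
  by rewrite (diffset_k k_ne k_u k_antipode z shift_inj) mem_imset.
rewrite h_k ffunE inE; move: shift_z; rewrite !inE; move: (k z (shift j)) => b.
by case: b; case: (z j); case: (u j); case: (u (shift j)); case: (shift j \in Cc).
Qed.

End ToggledFixedPair.

Lemma fixed_off1_exists i (a : bool) : exists x, x i = a /\ fixed_on h [set~ i] x.
Proof.
have i_nT : [set~ i] != setT by apply/eqP => /setP /(_ i); rewrite !inE eqxx.
have [x [[x_a x_fix] _]] := h_proper [ffun _ => a] i_nT.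
by exists x; rewrite x_a ?ffunE // !inE negbK.
Qed.

Lemma fixed_off1_eq i x y :
  x i = y i -> fixed_on h [set~ i] x -> fixed_on h [set~ i] y -> x = y.
Proof.
have i_nT : [set~ i] != setT by apply/eqP => /setP /(_ i); rewrite !inE eqxx.
move=> xy_i x_fix y_fix; apply: (unique_fixed_on_eq (h_proper x i_nT)) => // v.
by rewrite !inE negbK => /eqP ->.
Qed.

Lemma fixed_off1_toggle i x :
  fixed_on h [set~ i] x -> ~ is_fixed h x -> h x = toggle x [set i].
Proof.
move=> x_fix x_nfix; apply/ffunP => v; rewrite ffunE inE.
have [->|vi] := eqVneq v i; last by rewrite addbF x_fix // !inE vi.
rewrite addbT; case: (eqVneq (h x i) (x i)) => [hx_i|]; last by case: (h x i) (x i) => [] [].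
case: x_nfix; apply/ffunP => w.
by have [->|wi] := eqVneq w i; last rewrite x_fix // !inE wi.
Qed.

(* Otherwise the coordinates [i] and [j] would both be added to the
   difference set of [a] and [b]. *)
Lemma toggle1_fixed_dist a b i j :
  h a = toggle a [set i] -> h b = toggle b [set j] -> i != j -> a j = b j -> a i != b i.
Proof.
move=> h_a h_b ij ab_j; apply/negP => /eqP ab_i.
have := h_ne a b; rewrite h_a h_b !hammingE.
have i_ab : i \notin diffset a b by rewrite inE ab_i eqxx.
have sub : i |: diffset a b \subset diffset (toggle a [set i]) (toggle b [set j]).
  apply/subsetP => v; rewrite !inE !ffunE !inE.
  case/orP => [/eqP ->|ab_v]; first by rewrite eqxx eq_sym (negbTE ij) addbF ab_i; case: (b i).
  have vi : v != i by apply: contraNneq ab_v => ->; rewrite ab_i.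
  have vj : v != j by apply: contraNneq ab_v => ->; rewrite ab_j.
  by rewrite (negbTE vi) (negbTE vj) !addbF.
by have := subset_leq_card sub; rewrite cardsU1 i_ab; lia.
Qed.

Lemma two_fixed_antipode x y :
  is_fixed h x -> is_fixed h y -> x != y -> y = antipode x.
Proof.
move=> x_fix y_fix xy; apply/ffunP => v; rewrite ffunE in_setT addbT.
have : y v != x v.
  apply: contra_neq xy => yx_v.
  by apply: (fixed_off1_eq (esym yx_v)) => w _; rewrite ?x_fix ?y_fix.
by case: (y v) (x v) => [] [].
Qed.

(* The two points fixed off [w0] with opposite values at [w0] are antipodal:
   a coordinate [j] where they agree would, together with the point fixed
   off [j], contradict [toggle1_fixed_dist] for one of the two values at [w0]. *)
Lemma fixed_point_free_antipode_pair w0 : (forall x, ~ is_fixed h x) ->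
  exists u, h u = toggle u [set w0] /\ h (antipode u) = toggle (antipode u) [set w0].
Proof.
move=> no_fix.
have [u [u_w0 u_fix]] := fixed_off1_exists w0 false.
have [w [w_w0 w_fix]] := fixed_off1_exists w0 true.
have h_u := fixed_off1_toggle u_fix (no_fix u).
have h_w := fixed_off1_toggle w_fix (no_fix w).
suff w_au : w = antipode u by exists u; rewrite -w_au.
apply/ffunP => j; rewrite ffunE in_setT addbT.
have [->|jw0] := eqVneq j w0; first by rewrite u_w0 w_w0.
case: (eqVneq (w j) (u j)) => [wu_j|]; last by case: (w j) (u j) => [] [].
have [p [p_j p_fix]] := fixed_off1_exists j (u j).
have h_p := fixed_off1_toggle p_fix (no_fix p).
have w0j : w0 != j by rewrite eq_sym.
have := toggle1_fixed_dist h_u h_p w0j (esym p_j).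
have := toggle1_fixed_dist h_w h_p w0j (etrans wu_j (esym p_j)).
by rewrite u_w0 w_w0; case: (p w0).
Qed.

Lemma unique_fixed_of_not_circular :
  0 < #|W| -> ~ (positive_circular h \/ negative_circular h) ->
  exists! x, is_fixed h x.
Proof.
move=> /card_gt0P [w0 _] not_circ; apply: NNPP => not_unique; apply: not_circ.
have [[x x_fix]|no_fix] := classic (exists x, is_fixed h x).
  have [y [y_fix xy]] : exists y, is_fixed h y /\ x != y.
    apply: NNPP => no_other; apply: not_unique; exists x; split=> // y y_fix.
    by apply: NNPP => xy; apply: no_other; exists y; split=> //; apply/eqP.
  have := toggled_fixed_pair_circular (u := x) (Cc := set0).
  rewrite cards0 !toggle0 -(two_fixed_antipode x_fix y_fix xy) x_fix y_fix.
  by move/(_ isT erefl erefl); left.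
have [u [h_u h_au]] := fixed_point_free_antipode_pair w0 (fun x x_fix => no_fix (ex_intro _ x x_fix)).
by right; have := toggled_fixed_pair_circular _ h_u h_au; rewrite cards1; apply.
Qed.

End UniqueFixedPoint.

Lemma unique_fixed_on_of_not_circular (V : finType) (f : network V) :
  non_expansive f ->
  ~ (exists (I : {set V}) (z : config V), I != set0 /\
       (positive_circular (subnet f I z) \/ negative_circular (subnet f I z))) ->
  forall I z, unique_fixed_on f I z.
Proof.
move=> f_ne no_circ I; have [n] := ubnP #|I|; elim: n I => // n IH I.
rewrite ltnS => le_In z; have [->|I_n0] := eqVneq I set0; first exact: unique_fixed_on0.
apply/unique_fixed_subnet/unique_fixed_of_not_circular.
- exact: non_expansive_subnet.
- move=> E y E_nT; apply/unique_fixed_on_subnet/IH.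
  rewrite (card_imset _ val_inj); apply: leq_trans le_In.
  by rewrite -card_subnet_type -cardsT proper_card // properT.
- by rewrite card_subnet_type card_gt0.
- by move=> circ; apply: no_circ; exists I, z.
Qed.

Theorem corollary6 (V : finType) (f : network V) :
  0 < #|V| ->
  non_expansive f ->
  ((forall (I : {set V}) (z : config V), I != set0 ->
      exists! x, is_fixed (subnet f I z) x)
   <->
   ~ (exists (I : {set V}) (z : config V), I != set0 /\
        (positive_circular (subnet f I z) \/ negative_circular (subnet f I z)))).
Proof.
move=> _ f_ne; split=> [uniq [I [z [I_n0 circ]]] | no_circ I z _].
  have sub_n0 : 0 < #|{: {v : V | v \in I}}| by rewrite card_subnet_type card_gt0.
  by case: circ => circ; apply: circular_not_unique_fixed sub_n0 circ (uniq I z I_n0).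
exact/unique_fixed_subnet/unique_fixed_on_of_not_circular.
Qed.
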